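(* Let $b$ be a Boolean expression, $C$ a HeyVL statement, $I$ an expectation, $\vec v$ a list of variables, and let $S=\mathrm{Park}(b,C,I)$ be the HeyVL program $\mathtt{assert}\ I$ [labelled (1)]; $\mathtt{havoc}\ \vec v$; $\mathtt{validate}$; $\mathtt{assume}\ I$ [labelled (I)]; $\mathtt{if}\ b\ \{\ C;\ \mathtt{assert}\ I$ [labelled (2)]$;\ \mathtt{assume}\ ?(\mathsf{false})$ [labelled (II)] $\}\ \mathtt{else}\ \{\}$. Let $X,Y$ be expectations, and let $S'$ be obtained from $S$ by removing some subset of the assertions (1) and (2), such that $\sigma\not\models\{X\}S'\{Y\}$ for some state $\sigma$, and such that $S'$ is minimal with this property (removing any further one of the assertions (1),(2) that $S'$ still contains yields a program $S''$ with $\models\{X\}S''\{Y\}$). Then: (1) If $S'$ includes assertion (1), then $X(\sigma')\not\le I(\sigma')$ for some state $\sigma'$. (2) If $S'$ includes assertion (2), then there is a state $\sigma'$ in which $b$ is true and $\sigma'\not\models\{I\}C\{I\}$. (3) If $S'$ includes neither (1) nor (2), and $C$ contains neither $\mathtt{assert}$ nor $\mathtt{coassume}$ statements, then there is a state $\sigma'$ in which $b$ is false and $I(\sigma')\not\le Y(\sigma')$.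
   Context: Expectations are functions from program states to $[0,\infty]$, ordered pointwise. $?(b)$ denotes the expectation equal to $\infty$ where $b$ holds and $0$ elsewhere. HeyVL statements and verification pre-expectation transformer $\mathrm{vp}$: $x :\approx \sum_i p_i\cdot t_i$: $\sum_i p_i X[x/t_i]$; $\mathtt{reward}\ a$: $X+a$; $S_1;S_2$: $\mathrm{vp}[S_1](\mathrm{vp}[S_2](X))$; $\mathtt{if}(\sqcap)/\mathtt{if}(\sqcup)\{S_1\}\mathtt{else}\{S_2\}$: pointwise min/max of the branch values; $\mathtt{assert}\ Y$: $\min(Y,X)$; $\mathtt{coassert}\ Y$: $\max(Y,X)$; $\mathtt{assume}\ Y$: $\infty$ where $Y\le X$, else $X$; $\mathtt{coassume}\ Y$: $0$ where $Y\ge X$, else $X$; $\mathtt{havoc}\ \vec v$/$\mathtt{cohavoc}\ \vec v$: pointwise inf/sup of $X$ over all values of $\vec v$; $\mathtt{validate}$: $\infty$ where $X=\infty$, else $0$; $\mathtt{covalidate}$: $0$ where $X=0$, else $\infty$. The conditional $\mathtt{if}\ b\{S_1\}\mathtt{else}\{S_2\}$ abbreviates $\mathtt{if}(\sqcap)\{\mathtt{assume}\ ?(b);S_1\}\mathtt{else}\{\mathtt{assume}\ ?(\neg b);S_2\}$. Removing a statement means replacing it by $\mathtt{skip}$ with $\mathrm{vp}[\mathtt{skip}](X)=X$. Write $\sigma\models\{A\}S\{B\}$ iff $A(\sigma)\le\mathrm{vp}[S](B)(\sigma)$, and $\models\{A\}S\{B\}$ iff this holds for all states. *)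

From HB Require Import structures.
From mathcomp Require Import all_boot all_order all_algebra.
From mathcomp Require Import boolp classical_sets reals constructive_ereal ereal.
Set Implicit Arguments. Unset Strict Implicit. Unset Printing Implicit Defensive.
Import Order.TTheory GRing.Theory Num.Theory.
Local Open Scope classical_set_scope.
Local Open Scope ring_scope.
Local Open Scope ereal_scope.

Section HeyVL.
Variables (R : realType) (Var : eqType) (Val : Type).

Definition state := Var -> Val.
(* expectations: functions from states to [0, oo]; nonnegativity is
   imposed via [nonneg_exp] *)
Definition expectation := state -> \bar R.
Definition nonneg_exp (X : expectation) := forall s, 0 <= X s.

Definition upd (s : state) (x : Var) (v : Val) : state :=
  fun y => if y == x then v else s y.

Definition iverson_inf (b : state -> bool) : expectation :=
  fun s => if b s then +oo else 0.

Inductive choice := Demonic | Angelic.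

Inductive stmt :=
| Skip
| Assign of Var & seq ((state -> R) * (state -> Val))  (* x :~ sum_i p_i . t_i *)
| Reward of expectation
| Seq of stmt & stmt
| Ite of choice & stmt & stmt
| Assert of expectation
| Coassert of expectation
| Assume of expectation
| Coassume of expectation
| Havoc of seq Var
| Cohavoc of seq Var
| Validate
| Covalidate.

Definition havoc_set (vs : seq Var) (s : state) : set state :=
  [set s' | forall y, y \notin vs -> s' y = s y].

Fixpoint vp (S : stmt) (X : expectation) : expectation :=
  match S with
  | Skip => X
  | Assign x d => fun s =>
      \sum_(pt <- d) ((pt.1 s)%:E * X (upd s x (pt.2 s)))
  | Reward a => fun s => X s + a s
  | Seq S1 S2 => vp S1 (vp S2 X)
  | Ite Demonic S1 S2 => fun s => Order.min (vp S1 X s) (vp S2 X s)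
  | Ite Angelic S1 S2 => fun s => Order.max (vp S1 X s) (vp S2 X s)
  | Assert Y => fun s => Order.min (Y s) (X s)
  | Coassert Y => fun s => Order.max (Y s) (X s)
  | Assume Y => fun s => if Y s <= X s then +oo else X s
  | Coassume Y => fun s => if X s <= Y s then 0 else X s
  | Havoc vs => fun s => ereal_inf [set X s' | s' in havoc_set vs s]
  | Cohavoc vs => fun s => ereal_sup [set X s' | s' in havoc_set vs s]
  | Validate => fun s => if X s == +oo then +oo else 0
  | Covalidate => fun s => if X s == 0 then 0 else +oo
  end.

Fixpoint wf_stmt (S : stmt) : Prop :=
  match S with
  | Skip | Havoc _ | Cohavoc _ | Validate | Covalidate => True
  | Assign _ d => forall s, all (fun pt => (0 <= pt.1 s)%R) d
                            /\ (\sum_(pt <- d) pt.1 s)%R = 1%R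
  | Reward a | Assert a | Coassert a | Assume a | Coassume a => nonneg_exp a
  | Seq S1 S2 | Ite _ S1 S2 => wf_stmt S1 /\ wf_stmt S2
  end.

Fixpoint no_assert_coassume (S : stmt) : bool :=
  match S with
  | Assert _ | Coassume _ => false
  | Seq S1 S2 | Ite _ S1 S2 => no_assert_coassume S1 && no_assert_coassume S2
  | _ => true
  end.

Definition sat_at (s : state) (A : expectation) (S : stmt) (B : expectation) :=
  A s <= vp S B s.
Definition valid (A : expectation) (S : stmt) (B : expectation) :=
  forall s, sat_at s A S B.

Definition ite_b (b : state -> bool) (S1 S2 : stmt) : stmt :=
  Ite Demonic (Seq (Assume (iverson_inf b)) S1)
              (Seq (Assume (iverson_inf (fun s => ~~ b s))) S2).

(* Park(b,C,I) with assertion (1) kept iff k1 and assertion (2) kept iff k2;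
   a removed assertion is replaced by skip. *)
Definition park (k1 k2 : bool) (b : state -> bool) (C : stmt)
    (I : expectation) (vs : seq Var) : stmt :=
  Seq (if k1 then Assert I else Skip)
  (Seq (Havoc vs)
  (Seq Validate
  (Seq (Assume I)
       (ite_b b (Seq C (Seq (if k2 then Assert I else Skip)
                            (Assume (iverson_inf (fun _ => false)))))
                Skip)))).

End HeyVL.

(* After havoc, validate and assume I, the value of Park(b,C,I) at a state s
   is +oo if I <= Phi(Z) on every state agreeing with s outside vs, and 0
   otherwise; here Phi(Z) = if b then vp C Z else Y is the characteristic
   functional of the loop and Z is I or +oo according to whether assertion (2)
   is kept.  Hence s |= {X} S' {Y} iff X s <= I s (when (1) is kept) and either
   X s = 0 or I <= Phi(Z) on the havoc set of s.  Comparing the failing program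
   with the valid one obtained by dropping an assertion locates the witness:
   dropping (1) only drops the first conjunct; dropping (2) turns Phi(I) into
   Phi(+oo), which agrees with Phi(I) where b is false; and if C has no assert
   or coassume then vp C (+oo) = +oo, so Phi(+oo) can fall below I only where
   b is false. *)

From mathcomp Require Import all_boot all_order all_algebra.
From mathcomp Require Import boolp classical_sets reals constructive_ereal ereal.

Import Order.TTheory GRing.Theory Num.Theory.
Local Open Scope classical_set_scope.
Local Open Scope ereal_scope.

Lemma ereal_inf_iverson (R : realType) (T : Type) (A : set T) (P : T -> bool) :
  ereal_inf [set (if P t then +oo else 0) | t in A]
  = (if `[< forall t, A t -> P t >] then +oo else 0 : \bar R).
Proof.
case: asboolP => [AP | /existsNP[t /not_implyP[At nPt]]].
  by apply/eqP; rewrite eq_le leey; apply/ereal_infP => _ [t At <-]; rewrite AP.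
apply/eqP; rewrite eq_le; apply/andP; split.
  by apply: ereal_inf_lbound; exists t => //; case: (P t) nPt.
by apply/ereal_infP => _ [t' _ <-]; case: ifP.
Qed.

Section VpFacts.
Variables (R : realType) (Var : eqType) (Val : Type).
Implicit Types (S : stmt R Var Val) (A Z : expectation R Var Val).

Lemma vp_ge0 S Z : wf_stmt S -> nonneg_exp Z -> nonneg_exp (vp S Z).
Proof.
elim: S Z => /=.
- by [].
- move=> x d Z wf Z0 s; have [hp _] := wf s.
  rewrite -(all_filterP hp) big_filter; apply: sume_ge0 => pt p0.
  by rewrite mule_ge0 ?lee_fin.
- by move=> a Z a0 Z0 s; rewrite adde_ge0.
- by move=> S1 IH1 S2 IH2 Z [w1 w2] Z0; apply/IH1/IH2.
- move=> [] S1 IH1 S2 IH2 Z [w1 w2] Z0 s.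
  + by rewrite le_min IH1 ?IH2.
  + by rewrite le_max IH1.
- by move=> A Z A0 Z0 s; rewrite le_min A0 Z0.
- by move=> A Z A0 Z0 s; rewrite le_max A0.
- by move=> A Z _ Z0 s; case: ifP.
- by move=> A Z _ Z0 s; case: ifP.
- by move=> vs Z _ Z0 s; apply/ereal_infP => _ [s' _ <-].
- move=> vs Z _ Z0 s; apply: le_trans (Z0 s) _.
  by apply: ereal_sup_ubound; exists s.
- by move=> Z _ Z0 s; case: ifP.
- by move=> Z _ Z0 s; case: ifP.
Qed.

Lemma vp_pinfty S :
  wf_stmt S -> no_assert_coassume S -> vp S (fun=> +oo) = (fun=> +oo).
Proof.
elim: S => /=.
- by [].
- move=> x d wf _; apply: funext => s; have [hp d1] := wf s.
  rewrite -(all_filterP hp) big_filter -ge0_sume_distrl; last first.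
    by move=> pt; rewrite lee_fin.
  by rewrite sumEFin -big_filter (all_filterP hp) d1 mul1e.
- move=> a a0 _; apply: funext => s.
  by rewrite addye // gt_eqF // (lt_le_trans _ (a0 s)) ?ltNye.
- by move=> S1 IH1 S2 IH2 [w1 w2] /andP[n1 n2]; rewrite IH2 // IH1.
- move=> [] S1 IH1 S2 IH2 [w1 w2] /andP[n1 n2]; apply: funext => s /=;
    by rewrite IH1 // IH2 // ?minxx ?maxxx.
- by [].
- by move=> A _ _; apply: funext => s; apply/eqP; rewrite eq_le leey le_max lexx orbT.
- by move=> A _ _; apply: funext => s; rewrite leey.
- by [].
- move=> vs _ _; apply: funext => s; apply/eqP; rewrite eq_le leey.
  by apply/ereal_infP => _ [? _ <-].
- move=> vs _ _; apply: funext => s; apply/eqP; rewrite eq_le leey.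
  by apply: ereal_sup_ubound; exists s.
- by move=> _ _; apply: funext.
- by move=> _ _; apply: funext.
Qed.

Lemma vp_ite_b_skip (b : state Var Val -> bool) S Z :
  nonneg_exp Z -> nonneg_exp (vp S Z) ->
  vp (ite_b b S (Skip R Var Val)) Z = fun s => if b s then vp S Z s else Z s.
Proof.
move=> Z0 SZ0; apply: funext => s; rewrite /= /iverson_inf.
by case: (b s); rewrite /= ?Z0 ?SZ0 leye_eq;
  case: eqP => [->|]; rewrite ?miney ?minye.
Qed.

Lemma vp_validate_assume A S Z :
  vp (Seq (Validate R Var Val) (Seq (Assume A) S)) Z
  = fun s => if A s <= vp S Z s then +oo else 0.
Proof.
apply: funext => s /=; case: (boolP (A s <= vp S Z s)) => AZ //=.
by case: (vp S Z s =P +oo) => // vpoo; rewrite vpoo leey in AZ.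
Qed.

End VpFacts.

Section Park.
Variables (R : realType) (Var : eqType) (Val : Type).
Variables (b : state Var Val -> bool) (C : stmt R Var Val).
Variables (I Y : expectation R Var Val) (vs : seq Var).
Hypotheses (I0 : nonneg_exp I) (Y0 : nonneg_exp Y) (wfC : wf_stmt C).
Implicit Types (X Z : expectation R Var Val) (s : state Var Val).

Definition loop_char Z : expectation R Var Val :=
  fun s => if b s then vp C Z s else Y s.

Definition inv_below_char Z s :=
  forall s', havoc_set vs s s' -> I s' <= loop_char Z s'.

Definition park_post (k2 : bool) : expectation R Var Val :=
  if k2 then I else fun=> +oo.

Lemma vp_park_body k2 :
  vp (ite_b b (Seq C (Seq (if k2 then Assert I else Skip R Var Val)
                          (Assume (iverson_inf R (fun=> false)))))
          (Skip R Var Val)) Y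
  = loop_char (park_post k2).
Proof.
set tail := Seq (if k2 then _ else _) _.
have post0 : nonneg_exp (park_post k2) by case: (k2) => // s; rewrite leey.
have post : vp tail Y = park_post k2.
  apply: funext => s; rewrite /tail /park_post.
  by case: (k2); rewrite /= /iverson_inf Y0 ?miney.
have body : vp (Seq C tail) Y = vp C (park_post k2) by rewrite -post.
by rewrite vp_ite_b_skip // body //; exact: vp_ge0.
Qed.

Lemma vp_park k1 k2 s :
  vp (park k1 k2 b C I vs) Y s
  = (if k1 then Order.min (I s) else id)
      (if `[< inv_below_char (park_post k2) s >] then +oo else 0).
Proof.
rewrite -[LHS]/(vp (if k1 then Assert I else Skip R Var Val)
  (vp (@Havoc R Var Val vs) (vp (Seq (Validate R Var Val) (Seq (Assume I) (ite_b b
    (Seq C (Seq (if k2 then Assert I else Skip R Var Val)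
      (Assume (iverson_inf R (fun=> false))))) (Skip R Var Val)))) Y)) s).
rewrite vp_validate_assume vp_park_body.
by case: k1; rewrite /= ereal_inf_iverson.
Qed.

Lemma sat_parkP X k1 k2 s :
  sat_at s X (park k1 k2 b C I vs) Y <->
  (k1 -> X s <= I s) /\ (X s <= 0 \/ inv_below_char (park_post k2) s).
Proof.
rewrite /sat_at vp_park; case: asboolP => inv; case: k1;
  rewrite /= ?le_min ?leey ?andbT; try rewrite -(rwP andP); by intuition.
Qed.

Lemma inv_below_char_witness Z Z' s :
  inv_below_char Z s -> ~ inv_below_char Z' s ->
  exists s', b s' /\ ~ I s' <= vp C Z' s'.
Proof.
move=> below /existsNP[s' /not_implyP[hs' nle]]; exists s'.
by move: (below s' hs') nle; rewrite /loop_char; case: (b s') => [_|le /(_ le)].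
Qed.

Lemma inv_below_char_pinfty_witness s :
  no_assert_coassume C -> ~ inv_below_char (fun=> +oo) s ->
  exists s', ~~ b s' /\ ~ I s' <= Y s'.
Proof.
move=> nac /existsNP[s' /not_implyP[_]]; rewrite /loop_char vp_pinfty // => nle.
by exists s'; move: nle; case: (b s') => [/(_ (leey _))|].
Qed.

Lemma park_assert1_needed X k2 s :
  ~ sat_at s X (park true k2 b C I vs) Y ->
  sat_at s X (park false k2 b C I vs) Y -> ~ X s <= I s.
Proof. by move=> fail /sat_parkP[_ ok] le; apply: fail; apply/sat_parkP. Qed.

Lemma park_assert2_needed X k1 s :
  ~ sat_at s X (park k1 true b C I vs) Y ->
  sat_at s X (park k1 false b C I vs) Y ->
  exists s', b s' /\ ~ sat_at s' I C I.
Proof.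
move=> fail /sat_parkP[le [X0 | below]].
  by exfalso; apply: fail; apply/sat_parkP; split=> //; left.
rewrite /sat_at; apply: (inv_below_char_witness _ I s below) => inv.
by apply: fail; apply/sat_parkP; split=> //; right.
Qed.

Lemma park_no_assert_needed X s :
  no_assert_coassume C -> ~ sat_at s X (park false false b C I vs) Y ->
  exists s', ~~ b s' /\ ~ I s' <= Y s'.
Proof.
move=> nac fail; apply: (inv_below_char_pinfty_witness s nac) => below.
by apply: fail; apply/sat_parkP; split=> //; right.
Qed.

End Park.

Theorem theorem6 (R : realType) (Var : eqType) (Val : Type)
  (b : state Var Val -> bool) (C : stmt R Var Val)
  (I X Y : expectation R Var Val) (vs : seq Var) (k1 k2 : bool) :
  nonneg_exp I -> nonneg_exp X -> nonneg_exp Y -> wf_stmt C ->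
  (exists s, ~ sat_at s X (park k1 k2 b C I vs) Y) ->
  (k1 -> valid X (park false k2 b C I vs) Y) ->
  (k2 -> valid X (park k1 false b C I vs) Y) ->
  [/\ (k1 -> exists s', ~ (X s' <= I s')),
      (k2 -> exists s', b s' /\ ~ sat_at s' I C I)
    & (~~ k1 -> ~~ k2 -> no_assert_coassume C ->
       exists s', ~~ b s' /\ ~ (I s' <= Y s'))].
Proof.
move=> I0 _ Y0 wfC [s fail] valid1 valid2; split.
- move=> k1T; exists s; move: fail (valid1 k1T s); rewrite k1T.
  exact: park_assert1_needed.
- move=> k2T; move: fail (valid2 k2T s); rewrite k2T.
  exact: park_assert2_needed.
- move=> /negbTE nk1 /negbTE nk2 nac; move: fail; rewrite nk1 nk2.
  exact: park_no_assert_needed.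
Qed.
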